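(* Let $\beta\in(0,1/2)$, $N=2^n$, $\delta_N=2^{-N^\beta}$. Let $(V,X,Z)$ be random variables with $V\in\{0,1\}$ and $X,Z$ taking values in finite alphabets $\mathcal X,\mathcal Z$, and let $P=P_{V^NX^NZ^N}$ be the distribution of $N$ i.i.d. copies of $(V,X,Z)$. Put $T^N=V^NG_N$ and $$\mathcal H_{V|Z}=\{i\in[N]:\ Z(T_i\mid T^{i-1},Z^N)\ge 1-\delta_N\},$$ the Bhattacharyya parameters being computed under $P$. Let $Q=Q_{V^NX^NZ^N}$ be any distribution on $\{0,1\}^N\times\mathcal X^N\times\mathcal Z^N$ with $\|P-Q\|_1\le N2^{-N^\beta}$, and under $Q$ again set $T^N=V^NG_N$. Let $\mathcal I\subseteq\mathcal H_{V|Z}$ and $\mathcal A\subseteq\mathcal I$, and write $T[\mathcal S]=(T_i)_{i\in\mathcal S}$. Then, with mutual information computed under $Q$, $$I\big(T[\mathcal I\setminus\mathcal A];\,T[\mathcal A],Z^N\big)=O\big(N^3 2^{-N^\beta}\big),$$ where the implied constant depends only on $|\mathcal Z|$ (and the bound holds for all sufficiently large $N$).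
   Context: $G_N=B_NF^{\otimes n}$ is Arıkan's polarizing matrix over $\mathbb F_2$: $F=\begin{pmatrix}1&0\\1&1\end{pmatrix}$, $\otimes$ is the Kronecker product and $B_N$ is the bit-reversal permutation matrix; $V^NG_N$ is computed over $\mathbb F_2$. For a binary random variable $A$ and a discrete random variable $B$, the Bhattacharyya parameter is $Z(A\mid B)=2\sum_b P_B(b)\sqrt{P_{A|B}(0|b)P_{A|B}(1|b)}$. $T^{i-1}=(T_1,\dots,T_{i-1})$, $[N]=\{1,\dots,N\}$, $\|\cdot\|_1$ is the $\ell_1$ distance between distributions, and logarithms are base 2. *)

From Stdlib Require Import Reals.
From HB Require Import structures.
From mathcomp Require Import all_boot all_order all_algebra.

Set Implicit Arguments.
Unset Strict Implicit.
Unset Printing Implicit Defensive.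

Section Kron.
Local Open Scope ring_scope.
Variable R : pzRingType.

Definition mx_at m n (A : 'M[R]_(m, n)) (i j : nat) : R :=
  match @insub _ (fun k => (k < m)%N) ('I_m) i,
        @insub _ (fun k => (k < n)%N) ('I_n) j with
  | Some i', Some j' => A i' j'
  | _, _ => 0
  end.

(* Kronecker product: (A (x) B)_{(i1,i2),(j1,j2)} = A_{i1 j1} B_{i2 j2},
   with row index i = i1 * m2 + i2 and column index j = j1 * n2 + j2. *)
Definition kronmx m1 n1 m2 n2 (A : 'M[R]_(m1, n1)) (B : 'M[R]_(m2, n2))
  : 'M[R]_(m1 * m2, n1 * n2) :=
  \matrix_(i, j) (mx_at A (i %/ m2) (j %/ n2) * mx_at B (i %% m2) (j %% n2)).
End Kron.

Local Open Scope ring_scope.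

Definition Fmx : 'M['F_2]_2 := \matrix_(i, j) (if (j <= i)%N then 1 else 0).

Fixpoint Fpow (n : nat) : 'M['F_2]_(2 ^ n) :=
  match n with
  | 0 => 1%:M
  | n'.+1 => castmx (esym (expnS 2 n'), esym (expnS 2 n')) (kronmx Fmx (Fpow n'))
  end.

Definition bitrev (n k : nat) : nat :=
  (\sum_(l < n) ((k %/ 2 ^ l) %% 2) * 2 ^ (n.-1 - l))%N.

Definition Bmx (n : nat) : 'M['F_2]_(2 ^ n) :=
  \matrix_(i, j) (if val j == bitrev n i then 1 else 0).

Definition Gmx (n : nat) : 'M['F_2]_(2 ^ n) := Bmx n *m Fpow n.

Close Scope ring_scope.

Local Open Scope R_scope.

Definition rsum (T : finType) (f : T -> R) : R := \big[Rplus/R0]_(t : T) f t.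

Definition is_dist (T : finType) (mu : T -> R) : Prop :=
  (forall t, 0 <= mu t) /\ rsum mu = 1.

Definition l1dist (T : finType) (mu nu : T -> R) : R :=
  rsum (fun t => Rabs (mu t - nu t)).

Definition pmarg (O T : finType) (mu : O -> R) (A : O -> T) (a : T) : R :=
  \big[Rplus/R0]_(w : O | A w == a) mu w.

Definition log2 (x : R) : R := ln x / ln 2.

Definition bhatt (O BT : finType) (mu : O -> R) (A : O -> 'F_2) (B : O -> BT) : R :=
  2 * \big[Rplus/R0]_(b : BT)
        (pmarg mu B b *
         sqrt ((pmarg mu (fun w => (A w, B w)) (0%R, b) / pmarg mu B b) *
               (pmarg mu (fun w => (A w, B w)) (1%R, b) / pmarg mu B b))).

Definition minfo (O TA TB : finType) (mu : O -> R) (A : O -> TA) (B : O -> TB) : R :=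
  \big[Rplus/R0]_(ab : TA * TB)
    (let pab := pmarg mu (fun w => (A w, B w)) ab in
     if Rlt_dec 0 pab
     then pab * log2 (pab / (pmarg mu A ab.1 * pmarg mu B ab.2))
     else 0).

(* sample space of (V^N, X^N, Z^N), N = 2^n *)
Definition Omega (n : nat) (X Z : finType) : finType :=
  ('rV['F_2]_(2 ^ n) * 'rV[X]_(2 ^ n) * 'rV[Z]_(2 ^ n))%type.

Definition iid (n : nat) (X Z : finType) (p : 'F_2 * X * Z -> R)
  (w : Omega n X Z) : R :=
  \big[Rmult/R1]_(k < 2 ^ n) p (w.1.1 ord0 k, w.1.2 ord0 k, w.2 ord0 k).

Definition Tvec (n : nat) (X Z : finType) (w : Omega n X Z) : 'rV['F_2]_(2 ^ n) :=
  mulmx w.1.1 (Gmx n).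

(* T[S] = (T_i)_{i in S}, encoded as the vector with entries outside S zeroed *)
Definition restr (N : nat) (t : 'rV['F_2]_N) (S : {set 'I_N}) : {ffun 'I_N -> 'F_2} :=
  [ffun k => if k \in S then t ord0 k else 0%R].

(* T^{i-1} = (T_1..T_{i-1}) for the 1-based index i+1, i.e. entries k < i *)
Definition prefix (N : nat) (t : 'rV['F_2]_N) (i : 'I_N) : {ffun 'I_N -> 'F_2} :=
  [ffun k : 'I_N => if (k < i)%N then t ord0 k else 0%R].

Definition NN (n : nat) : R := INR (2 ^ n).
Definition delta (n : nat) (beta : R) : R := Rpower 2 (- Rpower (NN n) beta).

Definition Hset (n : nat) (X Z : finType) (p : 'F_2 * X * Z -> R) (beta : R)
  : {set 'I_(2 ^ n)} :=
  [set i | if Rle_dec (1 - delta n beta)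
                (bhatt (iid p) (fun w : Omega n X Z => Tvec w ord0 i)
                               (fun w => (prefix (Tvec w) i, w.2)))
           then true else false].

From Pilot Require Import Defs.
From Stdlib Require Import Reals Lra.
From HB Require Import structures.
From mathcomp Require Import all_boot all_order all_algebra.
Local Open Scope R_scope.

Set Implicit Arguments.
Unset Strict Implicit.
Unset Printing Implicit Defensive.

(* Entropies are in nats; write T for V^N G_N.  The mutual information is bounded
   by a conditional-entropy deficit,
     I(T[I\A]; T[A], Z^N) <= |I| ln 2 - H(T[I] | Z^N).
   Under P, the chain rule and the fact that conditioning on less cannot decrease
   entropy give H(T[I] | Z^N) >= sum_{i in I} H(T_i | T^{i-1}, Z^N), and for a bit
   Z(T_i | B) >= 1 - delta forces H(T_i | B) >= ln 2 - 2 delta, from the pointwise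
   bound h(p) >= ln 2 - 2 + 4 sqrt (p (1 - p)).  Entropy is continuous in l1:
   writing P = m + dP and Q = m + dQ with m = min(P, Q), subadditivity of -x ln x
   and Gibbs' inequality show that H(T[I] | Z^N) changes by at most
   l1 (1 + N ln (4|Z| + 4)) + 2 delta from P to Q, which is O(N^2 delta) when
   l1 <= N delta. *)

(* [Rplus] and [Rmult] as monoid laws, so that the generic bigop lemmas
   ([big_split], [big_distrl], [bigA_distr_bigA], ...) apply to Stdlib reals. *)
Lemma Rplus_assoc_law : associative Rplus.
Proof. by move=> x y z; rewrite Rplus_assoc. Qed.

HB.instance Definition _ :=
  Monoid.isComLaw.Build R R0 Rplus Rplus_assoc_law Rplus_comm Rplus_0_l.

Lemma Rmult_assoc_law : associative Rmult.
Proof. by move=> x y z; rewrite Rmult_assoc. Qed.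

HB.instance Definition _ :=
  Monoid.isComLaw.Build R R1 Rmult Rmult_assoc_law Rmult_comm Rmult_1_l.
HB.instance Definition _ := Monoid.isMulLaw.Build R R0 Rmult Rmult_0_l Rmult_0_r.
HB.instance Definition _ :=
  Monoid.isAddLaw.Build R Rmult Rplus Rmult_plus_distr_r Rmult_plus_distr_l.

Section BigR.
Variable I : finType.

Lemma bigR_le (P : pred I) (F G : I -> R) :
  (forall i, P i -> F i <= G i) ->
  \big[Rplus/R0]_(i | P i) F i <= \big[Rplus/R0]_(i | P i) G i.
Proof. by move=> FG; elim/big_rec2: _ => [|i x y /FG]; lra. Qed.

Lemma bigR_ge0 (P : pred I) (F : I -> R) :
  (forall i, P i -> 0 <= F i) -> 0 <= \big[Rplus/R0]_(i | P i) F i.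
Proof. by move=> F0; elim/big_rec: _ => [|i x /F0]; lra. Qed.

Lemma bigR_opp (P : pred I) (F : I -> R) :
  \big[Rplus/R0]_(i | P i) - F i = - \big[Rplus/R0]_(i | P i) F i.
Proof. by elim/big_rec2: _ => [|i x y _ ->]; ring. Qed.

Lemma bigR_le_rsum (P : pred I) (F : I -> R) :
  (forall i, 0 <= F i) -> \big[Rplus/R0]_(i | P i) F i <= rsum F.
Proof.
move=> F0; rewrite /rsum [X in _ <= X](bigID P) /=.
have := @bigR_ge0 (fun i => ~~ P i) F (fun i _ => F0 i); lra.
Qed.

Lemma rsum_le (F G : I -> R) : (forall i, F i <= G i) -> rsum F <= rsum G.
Proof. by move=> FG; apply: bigR_le => i _. Qed.

Lemma rsumD (F G : I -> R) : rsum (fun i => F i + G i) = rsum F + rsum G.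
Proof. exact: big_split. Qed.

Lemma rsumN (F : I -> R) : rsum (fun i => - F i) = - rsum F.
Proof. exact: bigR_opp. Qed.

Lemma rsumMl (c : R) (F : I -> R) : rsum (fun i => c * F i) = c * rsum F.
Proof. by rewrite /rsum big_distrr. Qed.

Lemma rsumMr (c : R) (F : I -> R) : rsum (fun i => F i * c) = rsum F * c.
Proof. by rewrite /rsum big_distrl. Qed.

Lemma rsum_const (c : R) : rsum (fun _ : I => c) = INR #|I| * c.
Proof.
rewrite /rsum big_const; elim: #|I| => [|m IH] /=; first ring.
by rewrite IH; case: m {IH} => [|m] /=; ring.
Qed.

End BigR.

Lemma rsum_pair (TX TY : finType) (F : TX * TY -> R) :
  rsum F = rsum (fun y => rsum (fun x => F (x, y))).
Proof. by rewrite /rsum exchange_big pair_bigA; apply: eq_bigr => -[]. Qed.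

Lemma rsumF2 (F : 'F_2 -> R) : rsum F = F 0%R + F 1%R.
Proof.
rewrite /rsum (bigD1 0%R) //= (bigD1 1%R) //= big_pred0; first by rewrite Rplus_0_r.
by case=> [[|[|]]].
Qed.

Definition negxlnx (x : R) : R := - (x * ln x).

Lemma negxlnx0 : negxlnx 0 = 0.
Proof. by rewrite /negxlnx; ring. Qed.

Lemma ln_le_sub1 x : 0 < x -> ln x <= x - 1.
Proof. by move=> x_gt0; have := exp_ineq1_le (ln x); rewrite exp_ln //; lra. Qed.

Lemma ln_le_compat x y : 0 < x -> x <= y -> ln x <= ln y.
Proof. by move=> x_gt0 [/(ln_increasing _ _ x_gt0)|<-]; lra. Qed.

Lemma Rinv_ge0 x : 0 <= x -> 0 <= / x.
Proof. by case=> [/Rinv_0_lt_compat/Rlt_le|<-] //; rewrite Rinv_0; lra. Qed.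

Lemma xln_ratio_le p c : 0 < p -> 0 < c -> p * ln c - p * ln p <= c - p.
Proof.
move=> p_gt0 c_gt0.
have := ln_le_sub1 (Rdiv_lt_0_compat _ _ c_gt0 p_gt0).
rewrite /Rdiv ln_mult ?ln_Rinv //; last exact: Rinv_0_lt_compat.
move=> /(Rmult_le_compat_l p _ _ (Rlt_le _ _ p_gt0)).
have -> : p * (c * / p - 1) = c - p by field; lra.
lra.
Qed.

Lemma negxlnx_le p c : 0 <= p -> 0 <= c -> (0 < p -> 0 < c) ->
  negxlnx p <= - (p * ln c) + c - p.
Proof.
case=> [p_gt0|<-] c_ge0 c_pos; last by rewrite negxlnx0; lra.
by have := xln_ratio_le p_gt0 (c_pos p_gt0); rewrite /negxlnx; lra.
Qed.

Lemma gibbs (T : finType) (p c : T -> R) :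
  (forall t, 0 <= p t) -> (forall t, 0 <= c t) -> (forall t, 0 < p t -> 0 < c t) ->
  rsum (fun t => negxlnx (p t)) <= - rsum (fun t => p t * ln (c t)) + rsum c - rsum p.
Proof.
move=> p_ge0 c_ge0 c_pos; rewrite /Rminus -!rsumN -!rsumD.
by apply: rsum_le => t; exact: negxlnx_le (p_ge0 t) (c_ge0 t) (c_pos t).
Qed.

(* Entropy in nats of the image of a nonnegative, not necessarily normalised,
   measure. *)
Definition ent (O T : finType) (mu : O -> R) (f : O -> T) : R :=
  rsum (fun t => negxlnx (pmarg mu f t)).

Definition cent (O TX TY : finType) (mu : O -> R) (X : O -> TX) (Y : O -> TY) : R :=
  ent mu (fun w => (X w, Y w)) - ent mu Y.

Lemma pmarg_fst (O TX TY : finType) (mu : O -> R) (X : O -> TX) (Y : O -> TY) y :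
  rsum (fun x => pmarg mu (fun w => (X w, Y w)) (x, y)) = pmarg mu Y y.
Proof.
rewrite /pmarg [in RHS](partition_big X predT) //=.
by apply: eq_bigr => x _; apply: eq_bigl => w; rewrite xpair_eqE andbC.
Qed.

Lemma negxlnx_bin_ge p0 p1 : 0 <= p0 -> 0 <= p1 ->
  (p0 + p1) * ln 2 - 2 * (p0 + p1) + 4 * sqrt (p0 * p1)
    <= negxlnx p0 + negxlnx p1 - negxlnx (p0 + p1).
Proof.
move=> p0_ge0 p1_ge0; set q := p0 + p1.
have [q_gt0|q0] : 0 < q \/ 0 = q by rewrite /q; lra.
  have term p : 0 <= p -> p * ln 2 + p - 2 * p * p / q <= p * ln q - p * ln p.
    (* [ln (2p/q) <= 2p/q - 1], multiplied by [p] *)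
    case=> [p_gt0|<-]; last by rewrite /Rdiv; lra.
    have := ln_le_sub1 (Rdiv_lt_0_compat (2 * p) q ltac:(lra) q_gt0).
    rewrite /Rdiv !ln_mult ?ln_Rinv; try lra; last exact: Rinv_0_lt_compat.
    move=> /(Rmult_le_compat_l p _ _ (Rlt_le _ _ p_gt0)).
    have -> : p * (2 * p * / q - 1) = 2 * p * p / q - p by rewrite /Rdiv; ring.
    lra.
  have t2 := sqrt_sqrt (p0 * p1) (Rmult_le_pos _ _ p0_ge0 p1_ge0).
  have t_ge0 := sqrt_pos (p0 * p1).
  (* AM-GM: [4 t q <= q^2 + 4 t^2] for [t = sqrt (p0 p1)] *)
  have amgm : 4 * sqrt (p0 * p1) <= 3 * q - 2 * (p0 * p0 + p1 * p1) / q.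
    apply: (Rmult_le_reg_r q) => //.
    have -> : (3 * q - 2 * (p0 * p0 + p1 * p1) / q) * q
              = 3 * q * q - 2 * (p0 * p0 + p1 * p1) by field; lra.
    have := pow2_ge_0 (q - 2 * sqrt (p0 * p1)); rewrite /q in t2 *; nra.
  have := term _ p0_ge0; have := term _ p1_ge0.
  have split : 2 * (p0 * p0 + p1 * p1) / q = 2 * p0 * p0 / q + 2 * p1 * p1 / q.
    by rewrite /Rdiv; ring.
  rewrite /negxlnx /q in amgm split *; lra.
rewrite -q0; have [-> ->] : p0 = 0 /\ p1 = 0 by rewrite /q in q0; lra.
by rewrite !Rmult_0_l sqrt_0 negxlnx0; lra.
Qed.

Lemma mul_sqrt_ratios p0 p1 : 0 <= p0 -> 0 <= p1 ->
  (p0 + p1) * sqrt (p0 / (p0 + p1) * (p1 / (p0 + p1))) = sqrt (p0 * p1).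
Proof.
move=> p0_ge0 p1_ge0; have [q_gt0|q0] : 0 < p0 + p1 \/ 0 = p0 + p1 by lra.
  have -> : p0 / (p0 + p1) * (p1 / (p0 + p1)) = p0 * p1 / ((p0 + p1) * (p0 + p1)).
    by field; lra.
  rewrite sqrt_div_alt; last exact: Rmult_lt_0_compat.
  by rewrite sqrt_square; [field|]; lra.
have [-> ->] : p0 = 0 /\ p1 = 0 by lra.
by rewrite Rplus_0_r !Rmult_0_l sqrt_0.
Qed.

Section Entropy.
Variables (O : finType) (mu : O -> R).
Hypothesis mu_ge0 : forall w, 0 <= mu w.

Lemma pmarg_ge0 (T : finType) (f : O -> T) t : 0 <= pmarg mu f t.
Proof. exact: bigR_ge0. Qed.

Lemma pmarg_le_rsum (T : finType) (f : O -> T) t : pmarg mu f t <= rsum mu.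
Proof. exact: bigR_le_rsum. Qed.

Lemma pmarg_mono (T U : finType) (f : O -> T) (g : O -> U) t u :
  (forall w, f w = t -> g w = u) -> pmarg mu f t <= pmarg mu g u.
Proof.
move=> fg; rewrite /pmarg (big_mkcond (fun w => f w == t)).
rewrite (big_mkcond (fun w => g w == u)).
apply: bigR_le => w _; case: eqP => [/fg ->|_]; rewrite ?eqxx; first lra.
by case: ifP => _; [apply: mu_ge0 | lra].
Qed.

Lemma pmarg_pos (T : finType) (f : O -> T) w : 0 < mu w -> 0 < pmarg mu f (f w).
Proof.
move=> mu_w; apply: Rlt_le_trans mu_w _; rewrite /pmarg (bigD1 w) //=.
have := @bigR_ge0 _ (fun w' => (f w' == f w) && (w' != w)) mu (fun w' _ => mu_ge0 w').
lra.
Qed.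

Lemma rsum_pmarg_comp (T : finType) (f : O -> T) (F : T -> R) :
  rsum (fun w => mu w * F (f w)) = rsum (fun t => pmarg mu f t * F t).
Proof.
rewrite /rsum (partition_big f predT) //=.
by apply: eq_bigr => t _; rewrite /pmarg big_distrl; apply: eq_bigr => w /eqP <-.
Qed.

Lemma rsum_pmarg (T : finType) (f : O -> T) : rsum (pmarg mu f) = rsum mu.
Proof. by rewrite /rsum [RHS](partition_big f predT). Qed.

Lemma entE (T : finType) (f : O -> T) :
  ent mu f = - rsum (fun w => mu w * ln (pmarg mu f (f w))).
Proof. by rewrite (rsum_pmarg_comp f (fun t => ln (pmarg mu f t))) -bigR_opp. Qed.

Lemma ent_eq_fibers (T U : finType) (f : O -> T) (g : O -> U) :
  (forall w w', (f w == f w') = (g w == g w')) -> ent mu f = ent mu g.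
Proof.
move=> fg; rewrite !entE /rsum; congr (- _); apply: eq_bigr => w _.
by congr (_ * ln _); apply: eq_bigl => w'; rewrite -fg.
Qed.

Lemma ent_le_cross (T : finType) (f : O -> T) (c : T -> R) :
  (forall t, 0 <= c t) -> (forall t, 0 < pmarg mu f t -> 0 < c t) ->
  ent mu f <= - rsum (fun w => mu w * ln (c (f w))) + rsum c - rsum mu.
Proof.
move=> c_ge0 c_pos; have := gibbs (pmarg_ge0 f) c_ge0 c_pos.
by rewrite rsum_pmarg -rsum_pmarg_comp.
Qed.

Lemma cent_le_coarser (TX TY TY' : finType) (X : O -> TX) (Y : O -> TY)
    (Y' : O -> TY') (g : TY -> TY') :
  (forall w, Y' w = g (Y w)) -> cent mu X Y <= cent mu X Y'.
Proof.
move=> Y'E.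
(* the joint law of [(X, Y)] making [X] and [Y] independent given [g Y] *)
pose c (v : TX * TY) :=
  pmarg mu (fun w => (X w, Y' w)) (v.1, g v.2) * pmarg mu Y v.2 / pmarg mu Y' (g v.2).
have XY_le x y :
  [/\ pmarg mu (fun w => (X w, Y w)) (x, y) <= pmarg mu (fun w => (X w, Y' w)) (x, g y),
      pmarg mu (fun w => (X w, Y w)) (x, y) <= pmarg mu Y y
    & pmarg mu (fun w => (X w, Y w)) (x, y) <= pmarg mu Y' (g y)].
  by split; apply: pmarg_mono => w [ex ey]; rewrite ?Y'E ?ex ey.
have c_ge0 v : 0 <= c v.
  by apply: Rmult_le_pos; [apply: Rmult_le_pos | apply: Rinv_ge0]; apply: pmarg_ge0.
have c_pos v : 0 < pmarg mu (fun w => (X w, Y w)) v -> 0 < c v.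
  case: v => x y /= pos; have [le1 le2 le3] := XY_le x y; rewrite /c /=.
  apply: Rmult_lt_0_compat; first by apply: Rmult_lt_0_compat; lra.
  by apply: Rinv_0_lt_compat; lra.
have cross : rsum (fun w => mu w * ln (c (X w, Y w))) =
    rsum (fun w => mu w * ln (pmarg mu (fun w => (X w, Y' w)) (X w, Y' w)))
    + rsum (fun w => mu w * ln (pmarg mu Y (Y w)))
    - rsum (fun w => mu w * ln (pmarg mu Y' (Y' w))).
  rewrite /Rminus -rsumN -!rsumD; apply: eq_bigr => w _.
  case: (mu_ge0 w) => [pos|<-]; last by ring.
  have p1 := pmarg_pos (fun w => (X w, Y' w)) pos.
  have p2 := pmarg_pos Y pos; have p3 := pmarg_pos Y' pos.
  rewrite /c /= -Y'E /Rdiv !ln_mult ?ln_Rinv //; try ring.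
  - exact: Rmult_lt_0_compat.
  - exact: Rinv_0_lt_compat.
have mass : rsum c <= rsum mu.
  rewrite rsum_pair -(rsum_pmarg Y); apply: rsum_le => y.
  rewrite /c /= /Rdiv !rsumMr pmarg_fst.
  case: (pmarg_ge0 Y' (g y)) => [pos|<-]; last by rewrite !Rmult_0_l; apply: pmarg_ge0.
  by rewrite Rmult_comm -Rmult_assoc Rinv_l; lra.
have /= := ent_le_cross c_ge0 c_pos; rewrite /cent !entE; lra.
Qed.

Lemma cent_bit_le (TY : finType) (a : O -> 'F_2) (Y : O -> TY) :
  cent mu a Y <= rsum mu * ln 2.
Proof.
pose c (v : 'F_2 * TY) := pmarg mu Y v.2 / 2.
have c_ge0 v : 0 <= c v by apply: Rmult_le_pos; [apply: pmarg_ge0 | lra].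
have c_pos v : 0 < pmarg mu (fun w => (a w, Y w)) v -> 0 < c v.
  case: v => x y /= pos; apply: Rdiv_lt_0_compat; last lra.
  by apply: Rlt_le_trans pos _; apply: pmarg_mono => w [_ ->].
have cross : rsum (fun w => mu w * ln (c (a w, Y w))) =
    rsum (fun w => mu w * ln (pmarg mu Y (Y w))) - rsum mu * ln 2.
  rewrite /Rminus -rsumMr -rsumN -rsumD; apply: eq_bigr => w _.
  case: (mu_ge0 w) => [pos|<-]; last by ring.
  rewrite /c /= /Rdiv ln_mult ?ln_Rinv; [ring | lra | exact: pmarg_pos |].
  by apply: Rinv_0_lt_compat; lra.
have mass : rsum c = rsum mu.
  rewrite rsum_pair -(rsum_pmarg Y); apply: eq_bigr => y _.
  by rewrite rsumF2 /c /=; field.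
have /= := ent_le_cross c_ge0 c_pos; rewrite cross mass /cent (entE Y).
(* the two copies of [ent mu (a, Y)] carry differently elaborated pair types,
   which [lra] would treat as distinct atoms; [set] identifies them *)
set e := ent mu _; lra.
Qed.

Lemma minfo_ent (TA TB : finType) (A : O -> TA) (B : O -> TB) :
  minfo mu A B * ln 2 = ent mu A + ent mu B - ent mu (fun w => (A w, B w)).
Proof.
have ln2_gt0 : 0 < ln 2 by have := ln_lt_2; lra.
rewrite /minfo; set AB := fun w => (A w, B w).
transitivity (rsum (fun ab => pmarg mu AB ab *
  (ln (pmarg mu AB ab) - ln (pmarg mu A ab.1) - ln (pmarg mu B ab.2)))).
  rewrite -rsumMr; apply: eq_bigr => -[x y] _ /=.
  case: Rlt_dec => [pos|nonpos]; last first.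
    rewrite /= Rmult_0_l.
    have -> : pmarg mu AB (x, y) = 0 by have := pmarg_ge0 AB (x, y); lra.
    ring.
  have [pA pB] : 0 < pmarg mu A x /\ 0 < pmarg mu B y.
    by split; apply: Rlt_le_trans pos _; apply: pmarg_mono => w [].
  have pAB := Rmult_lt_0_compat _ _ pA pB.
  rewrite /= /log2 /Rdiv ln_mult ?ln_Rinv ?ln_mult //; first by field; lra.
  exact: Rinv_0_lt_compat.
rewrite -(rsum_pmarg_comp AB).
rewrite !entE /Rminus -!rsumN -!rsumD; apply: eq_bigr => w _ /=; ring.
Qed.

Lemma cent_ge_bhatt (TB : finType) (a : O -> 'F_2) (B : O -> TB) :
  rsum mu * ln 2 - 2 * (rsum mu - bhatt mu a B) <= cent mu a B.
Proof.
pose p0 b := pmarg mu (fun w => (a w, B w)) (0%R, b).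
pose p1 b := pmarg mu (fun w => (a w, B w)) (1%R, b).
have p0_ge0 b : 0 <= p0 b by apply: pmarg_ge0.
have p1_ge0 b : 0 <= p1 b by apply: pmarg_ge0.
have pB b : pmarg mu B b = p0 b + p1 b by rewrite -(pmarg_fst mu a B) rsumF2.
have ent_aB :
    ent mu (fun w => (a w, B w)) = rsum (fun b => negxlnx (p0 b) + negxlnx (p1 b)).
  by rewrite /ent rsum_pair; apply: eq_bigr => b _; rewrite rsumF2.
have ent_B : ent mu B = rsum (fun b => negxlnx (p0 b + p1 b)).
  by apply: eq_bigr => b _; rewrite pB.
have mass : rsum mu = rsum (fun b => p0 b + p1 b).
  by rewrite -(rsum_pmarg B); apply: eq_bigr => b _; rewrite pB.
have bhattE : bhatt mu a B = 2 * rsum (fun b => sqrt (p0 b * p1 b)).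
  by rewrite /bhatt; congr (2 * _); apply: eq_bigr => b _; rewrite pB mul_sqrt_ratios.
have := rsum_le (fun b => negxlnx_bin_ge (p0_ge0 b) (p1_ge0 b)).
rewrite /cent ent_aB ent_B bhattE mass /Rminus !(rsumD, rsumN, rsumMl, rsumMr); lra.
Qed.

End Entropy.

Lemma negxlnx_subadd x y : 0 <= x -> 0 <= y ->
  negxlnx (x + y) <= negxlnx x + negxlnx y.
Proof.
move=> [x_gt0|<-] [y_gt0|<-]; rewrite ?Rplus_0_l ?Rplus_0_r ?negxlnx0; try lra.
have := ln_le_compat x_gt0 (_ : x <= x + y); have := ln_le_compat y_gt0 (_ : y <= x + y).
rewrite /negxlnx; nra.
Qed.

Lemma negxlnx_add_ge x y : 0 <= x -> 0 <= y -> x + y <= 1 ->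
  negxlnx x - y <= negxlnx (x + y).
Proof.
move=> x_ge0 y_ge0 xy_le1.
have yln : y * ln (x + y) <= 0.
  case: y_ge0 => [y_gt0|<-]; last lra.
  have := ln_le_sub1 (_ : 0 < x + y); nra.
have xln : x * ln (x + y) <= x * ln x + y.
  case: x_ge0 => [x_gt0|<-]; last lra.
  by have := xln_ratio_le x_gt0 (_ : 0 < x + y); lra.
rewrite /negxlnx; lra.
Qed.

Section Perturbation.
Variables (O : finType) (a b c : O -> R).
Hypotheses (a_ge0 : forall w, 0 <= a w) (b_ge0 : forall w, 0 <= b w).
Hypothesis cE : forall w, c w = a w + b w.

Lemma pmarg_splitE (T : finType) (f : O -> T) t :
  pmarg c f t = pmarg a f t + pmarg b f t.
Proof. by rewrite /pmarg -big_split; apply: eq_bigr => w _; rewrite cE. Qed.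

Lemma ent_split_le (T : finType) (f : O -> T) : ent c f <= ent a f + ent b f.
Proof.
rewrite -rsumD; apply: rsum_le => t; rewrite pmarg_splitE.
by apply: negxlnx_subadd; apply: pmarg_ge0.
Qed.

Lemma ent_split_ge (T : finType) (f : O -> T) :
  rsum c <= 1 -> ent a f - rsum b <= ent c f.
Proof.
have c_ge0 w : 0 <= c w by rewrite cE; have := a_ge0 w; have := b_ge0 w; lra.
move=> c_le1; rewrite -(rsum_pmarg b f) /Rminus -rsumN -rsumD; apply: rsum_le => t.
have := pmarg_le_rsum c_ge0 f t; rewrite pmarg_splitE => le1.
by apply: negxlnx_add_ge; [apply: pmarg_ge0.. | lra].
Qed.

End Perturbation.

Lemma ent_le_mass (O T : finType) (b : O -> R) (f : O -> T) g :
  (forall w, 0 <= b w) -> 0 < g -> ent b f <= rsum b * - ln g + INR #|T| * g.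
Proof.
move=> b_ge0 g_gt0; rewrite -(rsum_pmarg b f) -rsum_const -rsumMr -rsumD.
apply: rsum_le => t.
have := negxlnx_le (pmarg_ge0 b_ge0 f t) (Rlt_le _ _ g_gt0) (fun=> g_gt0).
have := pmarg_ge0 b_ge0 f t; lra.
Qed.

Lemma l1dist_ge0 (T : finType) (P Q : T -> R) : 0 <= l1dist P Q.
Proof. by apply: bigR_ge0 => t _; apply: Rabs_pos. Qed.

Lemma l1dist_minE (T : finType) (P Q : T -> R) :
  l1dist P Q
  = rsum (fun t => P t - Rmin (P t) (Q t)) + rsum (fun t => Q t - Rmin (P t) (Q t)).
Proof.
rewrite -rsumD; apply: eq_bigr => t _.
by rewrite /Rmin; case: Rle_dec => PQ; [rewrite Rabs_left1 | rewrite Rabs_right]; lra.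
Qed.

Lemma cent_l1_ge (O TX TY : finType) (P Q : O -> R) (X : O -> TX) (Y : O -> TY) g :
  is_dist P -> is_dist Q -> 0 < g ->
  cent P X Y - (l1dist P Q * (1 - ln g) + (INR #|{: TX * TY}| + INR #|TY|) * g)
    <= cent Q X Y.
Proof.
move=> [P_ge0 P_sum] [Q_ge0 Q_sum] g_gt0.
pose m t := Rmin (P t) (Q t); pose dP t := P t - m t; pose dQ t := Q t - m t.
have m_ge0 t : 0 <= m t by apply: Rmin_glb.
have dP_ge0 t : 0 <= dP t by have := Rmin_l (P t) (Q t); rewrite /dP /m; lra.
have dQ_ge0 t : 0 <= dQ t by have := Rmin_r (P t) (Q t); rewrite /dQ /m; lra.
have PE t : P t = m t + dP t by rewrite /dP; ring.
have QE t : Q t = m t + dQ t by rewrite /dQ; ring.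
have l1E : l1dist P Q = rsum dP + rsum dQ := l1dist_minE P Q.
rewrite /cent l1E; set XY := fun w => (X w, Y w).
have := ent_split_le m_ge0 dP_ge0 PE XY.
have := ent_split_ge m_ge0 dQ_ge0 QE XY (Req_le _ _ Q_sum).
have := ent_split_le m_ge0 dQ_ge0 QE Y.
have := ent_split_ge m_ge0 dP_ge0 PE Y (Req_le _ _ P_sum).
have : ent dP XY <= rsum dP * - ln g + INR #|{: TX * TY}| * g :=
  ent_le_mass XY dP_ge0 g_gt0.
have := ent_le_mass Y dQ_ge0 g_gt0; lra.
Qed.

Lemma set_ind_max N (Pr : {set 'I_N} -> Prop) :
  Pr set0 ->
  (forall (j : 'I_N) (S : {set 'I_N}),
     (forall k, k \in S -> (k < j)%N) -> Pr S -> Pr (j |: S)) ->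
  forall S, Pr S.
Proof.
move=> Pr0 PrU S.
elim: {S}#|S| {-2}S (erefl #|S|) => [S /cards0_eq -> //|c IH S cardS].
have [j0 Sj0] : exists j, j \in S by apply/set0Pn; rewrite -card_gt0 cardS.
case: (arg_maxnP val Sj0) => j Sj jmax; have {}Sj : j \in S := Sj.
have cardSj : #|S :\ j| = c by move: cardS; rewrite (cardsD1 j) Sj add1n => -[].
rewrite -(setD1K Sj); apply: PrU => [k|]; last exact: IH.
rewrite in_setD1 => /andP [kj kS]; have k_le_j : (k <= j)%N := jmax k kS.
rewrite ltn_neqAle k_le_j andbT.
by apply: contra kj => /eqP/val_inj ->.
Qed.

Section Restriction.
Variable N : nat.
Implicit Types (t : 'rV['F_2]_N) (S : {set 'I_N}).

Lemma restr_eqP t (t' : 'rV['F_2]_N) S :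
  reflect {in S, forall k, t ord0 k = t' ord0 k} (restr t S == restr t' S).
Proof.
apply: (iffP eqP) => [tt' k kS | tt'].
  by have := congr1 (fun f : {ffun 'I_N -> 'F_2} => f k) tt'; rewrite !ffunE kS.
by apply/ffunP => k; rewrite !ffunE; case: ifP => // /tt'.
Qed.

Lemma restr_setU1_eq t (t' : 'rV['F_2]_N) (j : 'I_N) S :
  (restr t (j |: S) == restr t' (j |: S))
  = (t ord0 j == t' ord0 j) && (restr t S == restr t' S).
Proof.
apply/restr_eqP/andP => [tt' | [/eqP tt'j /restr_eqP tt'S] k /setU1P [->|]] //.
split; first by apply/eqP/tt'; exact: setU11.
by apply/restr_eqP => k kS; apply: tt'; exact: setU1r.
exact: tt'S.
Qed.

Lemma restr_setD_eq t (t' : 'rV['F_2]_N) (I A : {set 'I_N}) : A \subset I ->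
  (restr t (I :\: A) == restr t' (I :\: A)) && (restr t A == restr t' A) =
  (restr t I == restr t' I).
Proof.
move=> AI; apply/andP/restr_eqP => [[/restr_eqP tt'D /restr_eqP tt'A] k kI | tt'].
  by case: (boolP (k \in A)) => [/tt'A | kA] //; apply: tt'D; rewrite inE kA.
split; apply/restr_eqP => k kS; apply: tt'; last exact: (subsetP AI).
by move: kS; rewrite inE => /andP [].
Qed.

Variables (O : finType) (mu : O -> R).
Hypothesis mu_ge0 : forall w, 0 <= mu w.
Variable tv : O -> 'rV['F_2]_N.

Lemma cent_restr0 (TY : finType) (Y : O -> TY) :
  cent mu (fun w => restr (tv w) set0) Y = 0.
Proof.
rewrite /cent (ent_eq_fibers mu (g := Y)) => [|w w']; first ring.
rewrite xpair_eqE; suff -> : restr (tv w) set0 == restr (tv w') set0 by [].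
by apply/restr_eqP => k; rewrite inE.
Qed.

Lemma cent_restr_setU1 (TY : finType) (Y : O -> TY) (j : 'I_N) S :
  cent mu (fun w => restr (tv w) (j |: S)) Y =
  cent mu (fun w => tv w ord0 j) (fun w => (restr (tv w) S, Y w))
  + cent mu (fun w => restr (tv w) S) Y.
Proof.
rewrite /cent (ent_eq_fibers mu (f := fun w => (restr (tv w) (j |: S), Y w))
  (g := fun w => (tv w ord0 j, (restr (tv w) S, Y w)))).
  set e1 := ent mu (fun w => (tv w ord0 j, _)).
  by set e2 := ent mu (fun w => (restr (tv w) S, _)); ring.
by move=> w w'; rewrite !xpair_eqE restr_setU1_eq andbA.
Qed.

Lemma cent_restr_le (TY : finType) (Y : O -> TY) S :
  cent mu (fun w => restr (tv w) S) Y <= INR #|S| * (rsum mu * ln 2).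
Proof.
elim/set_ind_max: S => [|j S S_lt_j IH]; first by rewrite cent_restr0 cards0 /=; lra.
have jS : j \notin S by apply/negP => /S_lt_j; rewrite ltnn.
rewrite cent_restr_setU1 cardsU1 jS add1n S_INR.
have := cent_bit_le mu_ge0 (fun w => tv w ord0 j) (fun w => (restr (tv w) S, Y w)); lra.
Qed.

Lemma cent_restr_ge (TY : finType) (Y : O -> TY) L S :
  (forall i, i \in S ->
     L <= cent mu (fun w => tv w ord0 i) (fun w => (Defs.prefix (tv w) i, Y w))) ->
  INR #|S| * L <= cent mu (fun w => restr (tv w) S) Y.
Proof.
elim/set_ind_max: S => [|j S S_lt_j IH] L_le; first by rewrite cent_restr0 cards0 /=; lra.
have jS : j \notin S by apply/negP => /S_lt_j; rewrite ltnn.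
rewrite cent_restr_setU1 cardsU1 jS add1n S_INR.
have := IH (fun i iS => L_le i (setU1r j iS)); have := L_le j (setU11 j S).
(* the entries of [S] all lie before [j], so [T[S]] is a function of [T^{j-1}] *)
have : cent mu (fun w => tv w ord0 j) (fun w => (Defs.prefix (tv w) j, Y w))
    <= cent mu (fun w => tv w ord0 j) (fun w => (restr (tv w) S, Y w)).
  apply: (@cent_le_coarser _ _ mu_ge0 _ _ _ _ _ _
    (fun uy : {ffun 'I_N -> 'F_2} * TY =>
       ([ffun k => if k \in S then uy.1 k else 0%R], uy.2))) => w /=.
  congr (_, _); apply/ffunP => k; rewrite !ffunE.
  by case: ifP => // /S_lt_j ->.
lra.
Qed.

Lemma cent_restr_ge_bhatt (TY : finType) (Y : O -> TY) d S :
  rsum mu = 1 ->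
  (forall i, i \in S ->
     1 - d <= bhatt mu (fun w => tv w ord0 i) (fun w => (Defs.prefix (tv w) i, Y w))) ->
  INR #|S| * (ln 2 - 2 * d) <= cent mu (fun w => restr (tv w) S) Y.
Proof.
move=> mass1 bhatt_ge; apply: cent_restr_ge => i /bhatt_ge.
have := cent_ge_bhatt mu_ge0 (fun w => tv w ord0 i)
  (fun w => (Defs.prefix (tv w) i, Y w)).
by rewrite mass1; lra.
Qed.

Lemma minfo_restr_le (TY : finType) (Y : O -> TY) (I A : {set 'I_N}) :
  rsum mu = 1 -> A \subset I ->
  minfo mu (fun w => restr (tv w) (I :\: A)) (fun w => (restr (tv w) A, Y w)) * ln 2
    <= INR #|I| * ln 2 - cent mu (fun w => restr (tv w) I) Y.
Proof.
move=> mass1 AI; rewrite minfo_ent //.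
have joint : ent mu (fun w => (restr (tv w) (I :\: A), (restr (tv w) A, Y w)))
           = ent mu (fun w => (restr (tv w) I, Y w)).
  by apply: ent_eq_fibers => w w'; rewrite !xpair_eqE andbA restr_setD_eq.
have ent_tt : ent mu (fun _ => tt) = 0.
  rewrite /ent /rsum (big_pred1 tt) => [|[]] //.
  by rewrite /pmarg (eq_bigl predT) // -/(rsum mu) mass1 /negxlnx ln_1; ring.
have ent_D : ent mu (fun w => restr (tv w) (I :\: A))
           = ent mu (fun w => (restr (tv w) (I :\: A), tt)).
  by apply: ent_eq_fibers => w w'; rewrite xpair_eqE andbT.
have := cent_restr_le (fun _ => tt) (I :\: A); have := cent_restr_le Y A.
have cardI : INR #|I :\: A| + INR #|A| = INR #|I|.
  by rewrite -plus_INR -(cardsID A I) (setIidPr AI) addnC.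
rewrite /cent joint ent_D ent_tt mass1.
set eD := ent mu (fun w => (restr (tv w) (I :\: A), _)).
set eA := ent mu (fun w => (restr (tv w) A, _)).
set eI := ent mu (fun w => (restr (tv w) I, _)); rewrite -cardI; lra.
Qed.

End Restriction.

Lemma minfo_restr_le_l1 (O TY : finType) (P Q : O -> R) N (tv : O -> 'rV['F_2]_N)
    (Y : O -> TY) (I A : {set 'I_N}) d g :
  is_dist P -> is_dist Q -> 0 < g -> A \subset I ->
  (forall i, i \in I ->
     1 - d <= bhatt P (fun w => tv w ord0 i) (fun w => (Defs.prefix (tv w) i, Y w))) ->
  minfo Q (fun w => restr (tv w) (I :\: A)) (fun w => (restr (tv w) A, Y w)) * ln 2
    <= 2 * INR #|I| * d + l1dist P Q * (1 - ln g)
       + (INR #|{: {ffun 'I_N -> 'F_2} * TY}| + INR #|TY|) * g.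
Proof.
move=> P_dist Q_dist g_gt0 AI bhatt_ge.
have := cent_restr_ge_bhatt (proj1 P_dist) (proj2 P_dist) bhatt_ge.
have := cent_l1_ge (fun w => restr (tv w) I) Y P_dist Q_dist g_gt0.
have := minfo_restr_le (proj1 Q_dist) tv Y (proj2 Q_dist) AI.
set cs := (_ + INR #|TY|); lra.
Qed.

Lemma iid_dist n (X Z : finType) (p : 'F_2 * X * Z -> R) :
  is_dist p -> is_dist (iid (n := n) p).
Proof.
case=> p_ge0 p_sum; split=> [w|].
  by rewrite /iid; elim/big_ind: _ => // [|x y]; [lra | exact: Rmult_le_pos].
pose rows (f : {ffun 'I_(2 ^ n) -> 'F_2 * X * Z}) : Omega n X Z :=
  ((\row_k (f k).1.1)%R, (\row_k (f k).1.2)%R, (\row_k (f k).2)%R).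
have rows_bij : bijective rows.
  exists (fun w : Omega n X Z => [ffun k => (w.1.1 ord0 k, w.1.2 ord0 k, w.2 ord0 k)]).
    by move=> f; apply/ffunP => k; rewrite ffunE !mxE; case: (f k) => -[].
  by case=> -[v x] z; congr (_, _, _); apply/rowP => k; rewrite !mxE ffunE.
rewrite /rsum (reindex rows) /=; last exact: onW_bij.
transitivity (\big[Rmult/R1]_(k < 2 ^ n) rsum p); last by apply: big1 => k _.
rewrite /rsum bigA_distr_bigA; apply: eq_bigr => f _.
by apply: eq_bigr => k _; rewrite !mxE; case: (f k) => -[].
Qed.

Lemma INR_muln a b : INR (a * b) = INR a * INR b.
Proof. by rewrite mulnE mult_INR. Qed.

Lemma INR_expn a b : INR (a ^ b) = INR a ^ b.
Proof. by elim: b => [|b IH]; rewrite ?expn0 // expnS INR_muln IH. Qed.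

Lemma card_obs_mul_le N (Z : finType) d : 0 <= d ->
  (INR #|{: {ffun 'I_N -> 'F_2} * 'rV[Z]_N}| + INR #|{: 'rV[Z]_N}|)
    * (d / (2 * INR #|Z| + 2) ^ N) <= 2 * d.
Proof.
move=> d_ge0; have Z_ge0 := pos_INR #|Z|.
have pow_gt0 : 0 < (2 * INR #|Z| + 2) ^ N by apply: pow_lt; lra.
apply: (Rmult_le_reg_r ((2 * INR #|Z| + 2) ^ N)) => //.
rewrite Rmult_assoc /Rdiv Rmult_assoc Rinv_l; last lra.
rewrite card_prod card_ffun card_mx !card_ord mul1n INR_muln !INR_expn.
have -> : (Zp_trunc (pdiv 2)).+2 = 2%N by [].
rewrite -Rpow_mult_distr (_ : INR 2 = 2) //.
have : INR #|Z| ^ N <= (2 * INR #|Z| + 2) ^ N by apply: pow_incr; lra.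
have : (2 * INR #|Z|) ^ N <= (2 * INR #|Z| + 2) ^ N by apply: pow_incr; lra.
nra.
Qed.

Lemma mem_Hset n (X Z : finType) (p : 'F_2 * X * Z -> R) beta i :
  i \in Hset n p beta ->
  1 - delta n beta <= bhatt (iid p) (fun w : Omega n X Z => Tvec w ord0 i)
                                   (fun w => (Defs.prefix (Tvec w) i, w.2)).
Proof. by rewrite inE; case: Rle_dec. Qed.

Lemma NN_ge1 n : 1 <= NN n.
Proof. by have /leP/le_INR := expn_gt0 2 n; rewrite /NN. Qed.

Lemma delta_gt0 n beta : 0 < delta n beta.
Proof. exact: exp_pos. Qed.

Lemma neg_ln_delta_div_le n beta c : beta <= 1 -> 1 <= c ->
  - ln (delta n beta / c ^ 2 ^ n) <= NN n * ln (2 * c).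
Proof.
move=> beta_le1 c_ge1; have N_ge1 := NN_ge1 n.
have Nbeta_le : Rpower (NN n) beta <= NN n.
  by rewrite -{2}(Rpower_1 (NN n)); [apply: Rle_Rpower | lra].
have c_pow_gt0 : 0 < c ^ 2 ^ n by apply: pow_lt; lra.
have ln2_gt0 : 0 < ln 2 by have := ln_lt_2; lra.
have inv_gt0 := Rinv_0_lt_compat _ c_pow_gt0; have d_gt0 := delta_gt0 n beta.
rewrite /Rdiv ln_mult ?ln_Rinv ?ln_pow ?ln_mult //; try lra.
rewrite /delta ln_Rpower -/(NN n); nra.
Qed.

Lemma cubic_loss_le N d K x l y c :
  1 <= N -> 0 < d -> 0 <= K -> 0 <= x <= N -> 0 <= l <= N * d ->
  - y <= N * K -> c <= 2 * d ->
  2 * x * d + l * (1 - y) + c <= (5 + K) * N ^ 3 * d.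
Proof.
move=> N_ge1 d_gt0 K_ge0 [x_ge0 x_le] [l_ge0 l_le] y_le c_le.
have l_loss : l * (1 - y) <= N * d * (1 + N * K).
  apply: (Rle_trans _ (l * (1 + N * K))); first by apply: Rmult_le_compat_l; lra.
  by apply: Rmult_le_compat_r; nra.
have Kd_ge0 := Rmult_le_pos _ _ K_ge0 (Rlt_le _ _ d_gt0).
have N_le : N <= N ^ 3 by rewrite /=; nra.
have N2_le : N ^ 2 <= N ^ 3 by rewrite /=; nra.
have := Rmult_le_compat_r _ _ _ (Rlt_le _ _ d_gt0) x_le.
have := Rmult_le_compat_r _ _ _ (Rlt_le _ _ d_gt0) N_le.
have := Rmult_le_compat_r _ _ _ Kd_ge0 N2_le.
have : d <= N ^ 3 * d by rewrite /=; nra.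
rewrite /= in l_loss *; lra.
Qed.

Theorem lemma1 (beta : R) (hbeta : 0 < beta < 1 / 2) (k : nat) :
  exists C : R, exists n0 : nat,
  forall n : nat, (n0 <= n)%nat ->
  forall (X Z : finType), #|Z| = k ->
  forall p : 'F_2 * X * Z -> R, is_dist p ->
  forall Q : Omega n X Z -> R, is_dist Q ->
  l1dist (iid p) Q <= NN n * delta n beta ->
  forall I A : {set 'I_(2 ^ n)},
  I \subset Hset n p beta -> A \subset I ->
  minfo Q (fun w => restr (Tvec w) (I :\: A))
          (fun w => (restr (Tvec w) A, w.2))
    <= C * NN n ^ 3 * delta n beta.
Proof.
have ln2_gt0 : 0 < ln 2 by have := ln_lt_2; lra.
have k_ge0 := pos_INR k.
pose K := ln (4 * INR k + 4).
have K_ge0 : 0 <= K by rewrite /K -ln_1; apply: ln_le_compat; lra.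
exists ((5 + K) / ln 2), 0%N => n _ X Z cardZ p p_dist Q Q_dist PQ I A IH AI.
have d_gt0 := delta_gt0 n beta.
pose g := delta n beta / (2 * INR k + 2) ^ 2 ^ n.
have g_gt0 : 0 < g by apply: Rdiv_lt_0_compat => //; apply: pow_lt; lra.
have key := minfo_restr_le_l1 (iid_dist n p_dist) Q_dist g_gt0 AI
  (fun i iI => mem_Hset (subsetP IH i iI)).
apply: (Rmult_le_reg_r (ln 2)) => //; apply: (Rle_trans _ _ _ key).
rewrite [X in _ <= X](_ : _ = (5 + K) * NN n ^ 3 * delta n beta); last by field; lra.
have cards := card_obs_mul_le (2 ^ n) Z (Rlt_le _ _ d_gt0); rewrite cardZ in cards.
apply: (cubic_loss_le (NN_ge1 n) d_gt0 K_ge0 _ (conj (l1dist_ge0 _ _) PQ) _ cards).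
  split; first exact: pos_INR.
  by apply/le_INR/leP; have := max_card I; rewrite card_ord.
rewrite /K (_ : 4 * INR k + 4 = 2 * (2 * INR k + 2)); last ring.
by apply: neg_ln_delta_div_le; lra.
Qed.
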